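(* Let $d\ge2$, $x\in\mathbb{R}^d$, $\theta\in\{\pm1\}^d$, $p := |\{l:\theta_l=1\}|-1$, and $v := x - \frac{\theta^\top x - p}{d}\theta$. Suppose $v\notin[0,1]^d$ and that there is exactly one index $i\in\{1,\dots,d\}$ with ($v_i>1$ and $\theta_i=1$) or ($v_i<0$ and $\theta_i=-1$). Set $\widetilde p := p-1$ if $v_i>1$ and $\widetilde p:=p$ if $v_i<0$. Let $\widetilde x$ and $\widetilde\theta$ be obtained from $x$ and $\theta$ by deleting the $i$-th component (keeping the original indices $j\neq i$), and let $\widetilde v := \widetilde x - \frac{\widetilde\theta^\top\widetilde x - \widetilde p}{d-1}\widetilde\theta$. Then for every $j\ne i$: (i) if $\theta_j = 1$ then $\widetilde v_j > v_j$; (ii) if $\theta_j=-1$ then $\widetilde v_j< v_j$. *)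

From mathcomp Require Import all_boot all_order all_algebra.
Set Implicit Arguments. Unset Strict Implicit. Unset Printing Implicit Defensive.
Import Order.TTheory GRing.Theory Num.Theory.
Local Open Scope ring_scope.

(* p := |{l : theta_l = 1}| - 1, as an element of R (it may be -1). *)
Definition pcount (R : realFieldType) (d : nat) (theta : 'I_d -> R) : R :=
  (#|[set l : 'I_d | theta l == 1]|)%:R - 1.

Definition vproj (R : realFieldType) (d : nat) (x theta : 'I_d -> R) (p : R)
  : 'I_d -> R :=
  fun j => x j - ((\sum_(k < d) theta k * x k) - p) / d%:R * theta j.

(* tilde v, with the i-th component deleted, keeping the original indices
   j <> i (its value at i is meaningless and never used):
   tilde v_j := x_j - (sum_{k<>i} theta_k x_k - pt)/(d-1) * theta_j *)
Definition vproj_del (R : realFieldType) (d : nat) (i : 'I_d)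
  (x theta : 'I_d -> R) (pt : R) : 'I_d -> R :=
  fun j => x j - ((\sum_(k < d | k != i) theta k * x k) - pt) / (d%:R - 1)
                 * theta j.

Definition viol (R : realFieldType) (d : nat) (v theta : 'I_d -> R) (l : 'I_d)
  : Prop :=
  (1 < v l /\ theta l = 1) \/ (v l < 0 /\ theta l = -1).

From mathcomp Require Import all_boot all_order all_algebra.
From mathcomp Require Import ring lra.
Set Implicit Arguments. Unset Strict Implicit. Unset Printing Implicit Defensive.
Import Order.TTheory GRing.Theory Num.Theory.
Local Open Scope ring_scope.

(* Both v and tilde v move x along theta: v = x - lam theta and
   tilde v = x - lam' theta off i.  Splitting off the i-th term of theta^T x
   and using theta_i^2 = 1 gives
   (d - 1) (lam' - lam) = (p - tilde p) - theta_i v_i,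
   which is negative exactly because i violates the box constraint in the
   direction that determines tilde p.  Hence tilde v_j - v_j = (lam - lam') theta_j
   has the sign of theta_j.  Neither v \notin [0,1]^d nor the uniqueness of
   the violating index is needed. *)

Section Multipliers.

Variables (R : realFieldType) (d : nat) (x theta : 'I_d -> R).

Definition proj_mult (p : R) : R :=
  ((\sum_(k < d) theta k * x k) - p) / d%:R.

Definition proj_del_mult (i : 'I_d) (pt : R) : R :=
  ((\sum_(k < d | k != i) theta k * x k) - pt) / (d%:R - 1).

Lemma vprojE p j : vproj x theta p j = x j - proj_mult p * theta j.
Proof. by []. Qed.

Lemma vproj_delE i pt j :
  vproj_del i x theta pt j = x j - proj_del_mult i pt * theta j.
Proof. by []. Qed.

Lemma vproj_del_subE i p pt j :
  vproj_del i x theta pt j - vproj x theta p j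
  = (proj_mult p - proj_del_mult i pt) * theta j.
Proof. by rewrite vprojE vproj_delE; ring. Qed.

Lemma proj_del_multE i p pt : (1 < d)%N -> theta i ^+ 2 = 1 ->
  proj_del_mult i pt
  = proj_mult p + (p - pt - theta i * vproj x theta p i) / (d%:R - 1).
Proof.
move=> d_gt1 theta_i2.
have d_gt1R : 1 < d%:R :> R by rewrite ltr1n.
have d_neq0 : d%:R != 0 :> R by apply/lt0r_neq0/(lt_trans ltr01).
have d1_neq0 : d%:R - 1 != 0 :> R by rewrite subr_eq0 gt_eqF.
have sum_split : \sum_(k < d) theta k * x k
                  = theta i * x i + \sum_(k < d | k != i) theta k * x k.
  by rewrite (bigD1 i).
rewrite vprojE /proj_del_mult /proj_mult; set lam := (_ - p) / _.
have -> : theta i * (x i - lam * theta i) = theta i * x i - lam * theta i ^+ 2.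
  by ring.
by rewrite theta_i2 /lam sum_split; field; rewrite d_neq0 d1_neq0.
Qed.

Lemma proj_del_mult_lt i p pt : (1 < d)%N -> theta i ^+ 2 = 1 ->
  p - pt < theta i * vproj x theta p i -> proj_del_mult i pt < proj_mult p.
Proof.
move=> d_gt1 theta_i2 gap; rewrite (proj_del_multE p pt d_gt1 theta_i2).
rewrite gtrDl pmulr_llt0 ?subr_lt0 //.
by rewrite invr_gt0 subr_gt0 ltr1n.
Qed.

End Multipliers.

Lemma viol_gap (R : realFieldType) (d : nat) (v theta : 'I_d -> R) i p :
  viol v theta i -> p - (if 1 < v i then p - 1 else p) < theta i * v i.
Proof.
case=> [[v_gt1 ->] | [v_lt0 ->]]; first by rewrite v_gt1 mul1r; lra.
by rewrite (ltNge 1) (ltW (lt_trans v_lt0 ltr01)) /=; lra.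
Qed.

Theorem theorem8 (R : realFieldType) (d : nat) (x theta : 'I_d -> R)
  (i : 'I_d) :
  (2 <= d)%N ->
  (forall l, theta l = 1 \/ theta l = -1) ->
  let p := pcount theta in
  let v := vproj x theta p in
  (exists l, v l < 0 \/ 1 < v l) ->
  viol v theta i ->
  (forall j, viol v theta j -> j = i) ->
  let pt := if 1 < v i then p - 1 else p in
  let vt := vproj_del i x theta pt in
  forall j, j != i ->
    (theta j = 1 -> v j < vt j) /\ (theta j = -1 -> vt j < v j).
Proof.
move=> d_ge2 theta_sign p v _ viol_i _ pt vt j _.
have theta_i2 : theta i ^+ 2 = 1.
  by case: (theta_sign i) => ->; rewrite ?sqrrN expr1n.
have mult_lt := proj_del_mult_lt d_ge2 theta_i2 (viol_gap p viol_i).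
have vt_sub_v := vproj_del_subE x theta i p pt j; rewrite -/v -/vt in vt_sub_v.
have gap_gt0 : 0 < proj_mult x theta p - proj_del_mult x theta i pt.
  by rewrite subr_gt0.
by split=> theta_j; rewrite theta_j in vt_sub_v; lra.
Qed.
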